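(* Let $u\in\mathbb C$ and $a\in\mathbb C\setminus\{0\}$, and let $s$ range over a domain on which $(t+u)^2+s\neq0$ for all $t\in[-1,1]$, with a branch $R(t,s)=\sqrt{(t+u)^2+s}$ continuous in $t$ and holomorphic in $s$; fix $\sqrt a$ and put $\sqrt{2a}=\sqrt2\sqrt a$. For integers $\nu\ge0$ define $$I_\nu(s)=\frac{1}{\sqrt{2a}}\int_{-1}^1\frac{(t+u)^\nu\,dt}{\sqrt{t+1}\,R(t,s)} .$$ Then, writing $R_1=R(1,s)=\sqrt{(u+1)^2+s}$, $$\frac{\partial I_{\nu+2}}{\partial s}=-\frac12I_\nu-s\frac{\partial I_\nu}{\partial s},$$ $$\frac{\partial}{\partial s}(I_2+I_1)=u\frac{\partial I_1}{\partial s}-\frac14I_0+\frac{1}{2\sqrt a\,R_1},$$ $$\frac{\partial}{\partial s}(I_3-I_1)=(u^2-2u)\frac{\partial I_1}{\partial s}-\frac34I_1+\frac{u-1}{4}I_0+\frac{u}{\sqrt a\,R_1}.$$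
   Context: $\sqrt{t+1}$ denotes the nonnegative real square root for $t\in[-1,1]$. The paper considers $s\ge0$ with $u,a$ fixed parameters arising from $v,w$ via $u=v(v+2z)/(v^2-4w)$, $a=v^2-4w$. *)

From Stdlib Require Import Reals.
From Coquelicot Require Import Coquelicot.

Open Scope R_scope.

(* I_nu(s) = 1/(sqrt 2 * sqrt a) * int_{-1}^{1} (t+u)^nu / (sqrt(t+1) * Rb t s) dt,
   the integral being the improper (generalized) Riemann integral, since the
   integrand is singular at t = -1.  [sa] is the fixed square root of a. *)
Definition Inu (u sa : C) (Rb : R -> C -> C) (nu : nat) (s : C) : C :=
  Cmult (Cinv (Cmult (RtoC (sqrt 2)) sa))
    (@RInt_gen C_R_CompleteNormedModule
       (fun t : R => Cdiv (Cpow (Cplus (RtoC t) u) nu)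
                          (Cmult (RtoC (sqrt (t + 1))) (Rb t s)))
       (at_right (-1)) (at_point 1)).

(* The substitution t = x^2 - 1 removes the singularity of 1/sqrt(t+1):
   I_nu(s) = J_nu(s) / sqrt(2a) with
   J_nu(s) = int_0^sqrt2 2 (x^2-1+u)^nu / R(x^2-1, s) dx, the integral of a
   function continuous in x.  Differentiation under the integral sign gives
   dJ_nu/ds = - int_0^sqrt2 (x^2-1+u)^nu / R^3 dx; it is justified by a
   uniform second-order Taylor bound for q |-> 2 / sqrt q, which holds because
   R(t, .) cannot switch to the other branch of the square root near s.
   Since R^2 = (t+u)^2 + s, (t+u)^(nu+2) / R^3 = (t+u)^nu / R - s (t+u)^nu / R^3,
   which is the recurrence.  The other two identities come from integrating the
   derivative of x (x^2-1+u)^k / R(x^2-1, s) for k = 0, 1 over [0, sqrt 2]; its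
   boundary values are 0 and sqrt 2 (1+u)^k / R_1. *)

From Stdlib Require Import Reals Lra.
From Coquelicot Require Import Coquelicot.
Open Scope R_scope.

(* Coquelicot states equalities at the carrier of its algebraic structures;
   [C_eq] restates them in [C] so that [ring] and [field] apply. *)
Ltac C_eq := match goal with |- ?a = ?b => change (@eq C a b) end;
  repeat change (minus ?x ?y) with (Cminus x y);
  repeat change (plus ?x ?y) with (Cplus x y);
  repeat change (@zero _) with (RtoC 0).

Lemma Cmod_le_Cmod_sub (a b : C) : Cmod a <= Cmod b + Cmod (Cminus a b).
Proof. replace a with (Cplus b (Cminus a b)) at 1 by ring. apply Cmod_triangle. Qed.

Lemma Cmod_sub_sym (a b : C) : Cmod (Cminus a b) = Cmod (Cminus b a).
Proof. replace (Cminus a b) with (Copp (Cminus b a)) by ring. apply Cmod_opp. Qed.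

Lemma locally_C_Cmod (z : C) (P : C -> Prop) :
  locally z P <-> exists eps, 0 < eps /\ forall w, Cmod (Cminus w z) < eps -> P w.
Proof.
split.
- intros H. destruct (locally_norm_le_locally z P H) as [eps He].
  exists eps. split; [apply cond_pos | exact He].
- intros [eps [He H]]. apply (locally_le_locally_norm z). exists (mkposreal eps He). exact H.
Qed.

Lemma locally_R_Rabs (x : R) (P : R -> Prop) :
  locally x P <-> exists d, 0 < d /\ forall y, Rabs (y - x) < d -> P y.
Proof.
split.
- intros [d Hd]. exists d. split; [apply cond_pos | exact Hd].
- intros [d [Hd H]]. exists (mkposreal d Hd). exact H.
Qed.

Lemma locally_C_AbsRing (z : C) (P : C -> Prop) :
  locally z P <-> @locally (AbsRing_UniformSpace C_AbsRing) z P.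
Proof.
rewrite locally_C_Cmod. split.
- intros [eps [He H]]. exists (mkposreal eps He). exact H.
- intros [eps H]. exists eps. split; [apply cond_pos | exact H].
Qed.

(** * Complex-valued functions of a real variable *)

Section ComplexValuedContinuity.

Implicit Types (f g : R -> C) (x : R).

Lemma continuous_RC_Cmod f x :
  continuous f x <-> forall eps, 0 < eps -> exists d, 0 < d /\
    forall y, Rabs (y - x) < d -> Cmod (Cminus (f y) (f x)) < eps.
Proof.
split.
- intros Hf eps He. apply locally_R_Rabs.
  apply (Hf (fun w => Cmod (Cminus w (f x)) < eps)), locally_C_Cmod.
  exists eps. split; auto.
- intros H P HP. apply locally_C_Cmod in HP as [eps [He HP]].
  destruct (H eps He) as [d [Hd Hd']]. apply locally_R_Rabs.
  exists d. split; auto.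
Qed.

Lemma continuous_RtoC (g : R -> R) x :
  continuous g x -> continuous (fun y => RtoC (g y)) x.
Proof.
intros Hg. apply continuous_RC_Cmod. intros eps He.
assert (L : locally x (fun y => Rabs (g y - g x) < eps)).
{ apply (Hg (fun w => Rabs (w - g x) < eps)). exists (mkposreal eps He). now intros w Hw. }
apply locally_R_Rabs in L as [d [Hd L]]. exists d. split; [exact Hd|].
intros y Hy. rewrite <- RtoC_minus, Cmod_R. exact (L y Hy).
Qed.

Lemma continuous_Cmult f g x :
  continuous f x -> continuous g x -> continuous (fun y => Cmult (f y) (g y)) x.
Proof.
intros Hf Hg.
assert (Habs : forall h : R -> C, continuous h x ->
    @continuous _ (AbsRing_UniformSpace C_AbsRing) h x).
{ intros h Hh P HP. apply Hh, locally_C_AbsRing, HP. }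
intros P HP.
apply (@continuous_mult _ C_AbsRing f g x (Habs f Hf) (Habs g Hg)), locally_C_AbsRing, HP.
Qed.

Lemma continuous_Cinv f x :
  continuous f x -> f x <> RtoC 0 -> continuous (fun y => Cinv (f y)) x.
Proof.
rewrite !continuous_RC_Cmod. intros Hf Hn eps He.
set (a := Cmod (f x)). assert (Ha : 0 < a) by (apply Cmod_gt_0; exact Hn).
assert (He' : 0 < Rmin (a / 2) (eps * a * a / 2)).
{ apply Rmin_pos; [lra | apply Rdiv_lt_0_compat; [repeat apply Rmult_lt_0_compat | ]; lra]. }
destruct (Hf _ He') as [d [Hd H]].
exists d. split; [exact Hd|]. intros y Hy.
specialize (H y Hy). apply Rmin_Rgt in H as [H1 H2].
assert (Hfy : a / 2 <= Cmod (f y)).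
{ assert (T := Cmod_le_Cmod_sub (f x) (f y)). rewrite Cmod_sub_sym in T. fold a in T. lra. }
assert (Hny : f y <> RtoC 0) by (intro E; rewrite E, Cmod_0 in Hfy; lra).
replace (Cminus (Cinv (f y)) (Cinv (f x)))
  with (Cdiv (Copp (Cminus (f y) (f x))) (Cmult (f y) (f x))) by (field; auto).
rewrite Cmod_div by (apply Cmult_neq_0; auto).
rewrite Cmod_opp, Cmod_mult. fold a.
apply Rmult_lt_reg_r with (Cmod (f y) * a); [nra|].
unfold Rdiv. rewrite Rmult_assoc, Rinv_l, Rmult_1_r by nra.
assert (eps * a * (a / 2) <= eps * a * Cmod (f y))
  by (apply Rmult_le_compat_l; [apply Rmult_le_pos |]; lra).
lra.
Qed.

Lemma continuous_Cpow f x n : continuous f x -> continuous (fun y => Cpow (f y) n) x.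
Proof.
intros Hf. induction n as [|n IH]; simpl.
- apply continuous_const.
- apply continuous_Cmult; auto.
Qed.

Lemma continuous_Cdiv f g x :
  continuous f x -> continuous g x -> g x <> RtoC 0 ->
  continuous (fun y => Cdiv (f y) (g y)) x.
Proof. intros Hf Hg Hn. apply continuous_Cmult; [exact Hf | apply continuous_Cinv; auto]. Qed.

Lemma continuity_pt_Cmod f x : continuous f x -> continuity_pt (fun y => Cmod (f y)) x.
Proof.
rewrite continuous_RC_Cmod. intros Hf. apply continuity_pt_filterlim.
intros P HP. apply locally_R_Rabs in HP as [eps [He HP]].
destruct (Hf eps He) as [d [Hd H]]. apply locally_R_Rabs. exists d. split; [exact Hd|].
intros y Hy. apply HP. specialize (H y Hy).
assert (T1 := Cmod_le_Cmod_sub (f y) (f x)). assert (T2 := Cmod_le_Cmod_sub (f x) (f y)).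
rewrite Cmod_sub_sym in T2. apply Rabs_lt_between'. lra.
Qed.

End ComplexValuedContinuity.

Section ComplexValuedDerivatives.

Implicit Types (f g h : R -> C) (x : R) (l : C).

Lemma is_derive_RC_Cmod f x l :
  is_derive f x l <-> forall eps, 0 < eps -> exists d, 0 < d /\
    forall y, Rabs (y - x) < d ->
    Cmod (Cminus (Cminus (f y) (f x)) (Cmult (RtoC (y - x)) l)) <= eps * Rabs (y - x).
Proof.
split.
- intros [_ Hd] eps He.
  destruct (Hd x (fun P H => H) (mkposreal eps He)) as [d Hd'].
  exists d. split; [apply cond_pos|]. intros y Hy.
  rewrite Cmod_norm, <- scal_R_Cmult. exact (Hd' y Hy).
- intros H. split; [apply is_linear_scal_l|].
  intros x' Hx'.
  apply (@is_filter_lim_locally_unique R_AbsRing R_NormedModule) in Hx'. subst x'.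
  intros eps. destruct (H eps (cond_pos eps)) as [d [Hd Hd']].
  apply locally_R_Rabs. exists d. split; [exact Hd|]. intros y Hy.
  rewrite <- Cmod_norm.
  change (Cmod (Cminus (Cminus (f y) (f x)) (scal (y - x) l)) <= eps * Rabs (y - x)).
  rewrite scal_R_Cmult. exact (Hd' y Hy).
Qed.

Lemma is_derive_RtoC (g : R -> R) x (l : R) :
  is_derive g x l -> is_derive (fun y => RtoC (g y)) x (RtoC l).
Proof.
intros [_ Hd]. apply is_derive_RC_Cmod. intros eps He.
destruct (Hd x (fun P H => H) (mkposreal eps He)) as [d Hd'].
exists d. split; [apply cond_pos|]. intros y Hy.
rewrite <- RtoC_mult, <- !RtoC_minus, Cmod_R. exact (Hd' y Hy).
Qed.

Lemma is_derive_RC_continuous f x l : is_derive f x l -> continuous f x.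
Proof. intros H. exact (@ex_derive_continuous R_AbsRing C_R_NormedModule f x (ex_intro _ l H)). Qed.

Lemma is_derive_RC_factor f g h x l :
  is_derive f x l -> continuous h x ->
  locally x (fun y => Cminus (g y) (g x) = Cmult (Cminus (f y) (f x)) (h y)) ->
  is_derive g x (Cmult l (h x)).
Proof.
rewrite !is_derive_RC_Cmod, continuous_RC_Cmod, locally_R_Rabs.
intros Hf Hh [d0 [Hd0 Hg]] eps He.
set (M := Cmod (h x)). set (L := Cmod l).
assert (HM : 0 <= M) by apply Cmod_ge_0. assert (HL : 0 <= L) by apply Cmod_ge_0.
set (e2 := Rmin 1 (eps / (2 * (L + 1)))).
assert (He1 : 0 < eps / (2 * (M + 1))) by (apply Rdiv_lt_0_compat; lra).
assert (He2 : 0 < e2) by (apply Rmin_pos; [lra | apply Rdiv_lt_0_compat; lra]).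
destruct (Hf _ He1) as [d1 [Hd1 H1]].
destruct (Hh _ He2) as [d2 [Hd2 H2]].
exists (Rmin d0 (Rmin d1 d2)). split; [repeat apply Rmin_pos; lra|]. intros y Hy.
apply Rmin_Rgt in Hy as [Hy0 Hy]. apply Rmin_Rgt in Hy as [Hy1 Hy2].
specialize (H1 y Hy1). specialize (H2 y Hy2). rewrite (Hg y Hy0).
replace (Cminus (Cmult (Cminus (f y) (f x)) (h y)) (Cmult (RtoC (y - x)) (Cmult l (h x)))) with
  (Cplus (Cmult (Cminus (Cminus (f y) (f x)) (Cmult (RtoC (y - x)) l)) (h y))
         (Cmult (Cmult (RtoC (y - x)) l) (Cminus (h y) (h x)))) by ring.
eapply Rle_trans; [apply Cmod_triangle|]. rewrite !Cmod_mult, Cmod_R. fold L.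
assert (Hhy : Cmod (h y) <= M + 1).
{ assert (T := Cmod_le_Cmod_sub (h y) (h x)). assert (e2 <= 1) by apply Rmin_l. fold M in T. lra. }
assert (Hyx : 0 <= Rabs (y - x)) by apply Rabs_pos.
assert (T1 : Cmod (Cminus (Cminus (f y) (f x)) (Cmult (RtoC (y - x)) l)) * Cmod (h y)
             <= eps / (2 * (M + 1)) * Rabs (y - x) * (M + 1))
  by (apply Rmult_le_compat; auto; apply Cmod_ge_0).
assert (T2 : Rabs (y - x) * L * Cmod (Cminus (h y) (h x))
             <= Rabs (y - x) * L * (eps / (2 * (L + 1)))).
{ apply Rmult_le_compat_l; [nra|].
  assert (e2 <= eps / (2 * (L + 1))) by apply Rmin_r. lra. }
assert (T3 : L * (eps / (2 * (L + 1))) <= eps / 2).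
{ apply Rmult_le_reg_r with (2 * (L + 1)); [lra|]. field_simplify; nra. }
replace (eps / (2 * (M + 1)) * Rabs (y - x) * (M + 1)) with (eps / 2 * Rabs (y - x)) in T1
  by (field; lra).
nra.
Qed.

Lemma is_derive_RC_mult f g x (l1 l2 : C) :
  is_derive f x l1 -> is_derive g x l2 ->
  is_derive (fun y => Cmult (f y) (g y)) x (Cplus (Cmult l1 (g x)) (Cmult l2 (f x))).
Proof.
intros Hf Hg.
apply (is_derive_ext (fun y => Cplus (Cmult (Cminus (f y) (f x)) (g y)) (Cmult (f x) (g y)))).
{ intros y. C_eq. ring. }
apply (is_derive_plus (V := C_R_NormedModule)).
- apply (is_derive_RC_factor f _ g); [exact Hf | now apply (is_derive_RC_continuous g x l2) |].
  apply filter_forall. intros y. ring.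
- apply (is_derive_RC_factor g _ (fun _ => f x)); [exact Hg | apply continuous_const |].
  apply filter_forall. intros y. ring.
Qed.

Lemma is_derive_RC_inv f x l :
  is_derive f x l -> f x <> RtoC 0 ->
  is_derive (fun y => Cinv (f y)) x (Cmult l (Copp (Cinv (Cmult (f x) (f x))))).
Proof.
intros Hf Hn.
assert (Cf : continuous f x) by now apply (is_derive_RC_continuous f x l).
assert (Nf : locally x (fun y => f y <> RtoC 0)).
{ apply (Cf (fun w => w <> RtoC 0)), locally_C_Cmod.
  exists (Cmod (f x)). split; [now apply Cmod_gt_0|].
  intros w Hw E. rewrite E in Hw.
  replace (Cminus (RtoC 0) (f x)) with (Copp (f x)) in Hw by ring.
  rewrite Cmod_opp in Hw. lra. }
apply (is_derive_RC_factor f _ (fun y => Copp (Cinv (Cmult (f y) (f x))))); [exact Hf | |].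
- apply (continuous_opp (V := C_R_NormedModule)), continuous_Cinv;
    [apply continuous_Cmult; [exact Cf | apply continuous_const] | now apply Cmult_neq_0].
- revert Nf. apply filter_imp. intros y Hy. field. split; auto.
Qed.

Lemma is_derive_RC_Cpow f x l n :
  is_derive f x l ->
  is_derive (fun y => Cpow (f y) n) x (Cmult (RtoC (INR n)) (Cmult (Cpow (f x) (pred n)) l)).
Proof.
intros Hf. induction n as [|n IH].
- replace (Cmult (RtoC (INR 0)) (Cmult (Cpow (f x) (pred 0)) l)) with (RtoC 0) by (simpl; ring).
  exact (@is_derive_const R_AbsRing C_R_NormedModule (RtoC 1) x).
- replace (Cmult (RtoC (INR (S n))) (Cmult (Cpow (f x) (pred (S n))) l)) with
    (Cplus (Cmult l (Cpow (f x) n))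
           (Cmult (Cmult (RtoC (INR n)) (Cmult (Cpow (f x) (pred n)) l)) (f x))).
  + exact (is_derive_RC_mult _ _ _ _ _ Hf IH).
  + rewrite S_INR, RtoC_plus. destruct n as [|n]; simpl; ring.
Qed.

Lemma is_derive_RC_sqr_inv f g x l :
  is_derive g x l -> continuous f x -> f x <> RtoC 0 ->
  locally x (fun y => Cmult (f y) (f y) = g y) ->
  is_derive f x (Cdiv l (Cmult (RtoC 2) (f x))).
Proof.
intros Hg Cf Nf Hsq.
assert (N2 : RtoC 2 <> RtoC 0) by (intro E; injection E; lra).
assert (Nff : locally x (fun y => Cplus (f y) (f x) <> RtoC 0)).
{ apply (Cf (fun w => Cplus w (f x) <> RtoC 0)), locally_C_Cmod.
  exists (Cmod (f x)). split; [now apply Cmod_gt_0|]. intros w Hw E.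
  replace (Cminus w (f x)) with (Copp (Cmult (RtoC 2) (f x))) in Hw
    by (replace w with (Cminus (Cplus w (f x)) (f x)) by ring; rewrite E; ring).
  rewrite Cmod_opp, Cmod_mult, Cmod_R, Rabs_pos_eq in Hw by lra.
  assert (0 < Cmod (f x)) by (apply Cmod_gt_0; auto). lra. }
assert (Nxx := locally_singleton _ _ Nff). simpl in Nxx.
replace (Cdiv l (Cmult (RtoC 2) (f x))) with (Cmult l (Cinv (Cplus (f x) (f x))))
  by (field; repeat split; auto).
apply (is_derive_RC_factor g f (fun y => Cinv (Cplus (f y) (f x))) x l Hg).
- apply continuous_Cinv; [|exact Nxx].
  apply (continuous_plus (V := C_R_NormedModule)); [exact Cf | apply continuous_const].
- generalize (filter_and _ _ Nff Hsq). apply filter_imp. intros y [Ny Ey].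
  rewrite <- Ey, <- (locally_singleton _ _ Hsq). field. exact Ny.
Qed.

End ComplexValuedDerivatives.

Notation RIntC := (@RInt C_R_CompleteNormedModule).

Section ComplexValuedIntegrals.

Implicit Types (f F : R -> C) (a b : R).

Lemma is_RInt_Cmult f a b (l c : C) :
  is_RInt f a b l -> is_RInt (fun x => Cmult c (f x)) a b (Cmult c l).
Proof.
intros H.
assert (H1 := @is_RInt_fct_extend_fst R_NormedModule R_NormedModule f a b l H).
assert (H2 := @is_RInt_fct_extend_snd R_NormedModule R_NormedModule f a b l H).
destruct c as [c1 c2], l as [l1 l2]. simpl in H1, H2.
assert (K1 := is_RInt_minus _ _ _ _ _ _ (is_RInt_scal _ _ _ c1 _ H1) (is_RInt_scal _ _ _ c2 _ H2)).
assert (K2 := is_RInt_plus _ _ _ _ _ _ (is_RInt_scal _ _ _ c1 _ H2) (is_RInt_scal _ _ _ c2 _ H1)).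
replace (Cmult (c1, c2) (l1, l2)) with
  (minus (scal c1 l1) (scal c2 l2), plus (scal c1 l2) (scal c2 l1)).
- exact (@is_RInt_fct_extend_pair R_NormedModule R_NormedModule
    (fun x => Cmult (c1, c2) (f x)) a b _ _ K1 K2).
- unfold Cmult, minus, plus, opp, scal; simpl. unfold mult; simpl. f_equal; ring.
Qed.

Lemma is_RInt_RIntC_continuous f a b :
  (forall x, Rmin a b <= x <= Rmax a b -> continuous f x) -> is_RInt f a b (RIntC f a b).
Proof.
intros Cf. apply (@RInt_correct C_R_CompleteNormedModule).
exact (@ex_RInt_continuous C_R_CompleteNormedModule f a b Cf).
Qed.

Lemma is_RInt_Cmod_le f a b (l : C) M :
  a <= b -> (forall x, a <= x <= b -> Cmod (f x) <= M) ->
  is_RInt f a b l -> Cmod l <= M * (b - a).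
Proof.
intros Hab Hb Hf. rewrite Cmod_norm.
apply (norm_RInt_le f (fun _ => M) a b l (M * (b - a)) Hab).
- intros x Hx. rewrite <- Cmod_norm. auto.
- exact Hf.
- replace (M * (b - a)) with (scal (b - a) M) by (unfold scal; simpl; unfold mult; simpl; ring).
  apply (@is_RInt_const R_NormedModule).
Qed.

Lemma continuous_eq_at_left (P Q : R -> C) b :
  continuous P b -> continuous Q b -> at_left b (fun y => P y = Q y) -> P b = Q b.
Proof.
intros HP HQ E.
assert (Hlim : forall h : R -> C, continuous h b -> filterlim h (at_left b) (locally (h b))).
{ intros h Hh S HS. specialize (Hh S HS). unfold filtermap, at_left, within in *.
  revert Hh. apply filter_imp. auto. }
apply (@filterlim_locally_unique _ R_AbsRing C_R_NormedModule (at_left b) _ Q).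
- apply (filterlim_ext_loc P); [exact E | exact (Hlim P HP)].
- exact (Hlim Q HQ).
Qed.

(* Only [a <= x < b] is assumed: the antiderivatives below involve [Rb t s],
   which need not be differentiable in [t] at [t = 1]. *)
Lemma is_RInt_derive_RC_left F f a b :
  a < b -> (forall x, continuous f x) -> continuous F b ->
  (forall x, a <= x < b -> is_derive F x (f x)) ->
  is_RInt f a b (Cminus (F b) (F a)).
Proof.
intros Hab Cf CF DF.
assert (If : forall c, is_RInt f a c (RIntC f a c))
  by (intros c; apply is_RInt_RIntC_continuous; auto).
replace (Cminus (F b) (F a)) with (RIntC f a b); [apply If|].
apply (continuous_eq_at_left (fun c => RIntC f a c) (fun c => Cminus (F c) (F a))).
- apply (continuous_RInt_1 f a b), filter_forall. exact If.
- apply (continuous_minus (V := C_R_NormedModule) F (fun _ => F a));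
    [exact CF | apply continuous_const].
- assert (Hba : 0 < b - a) by lra. exists (mkposreal _ Hba). intros y Hy Hyb.
  apply Rabs_lt_between' in Hy. simpl in Hy.
  apply (@is_RInt_unique C_R_CompleteNormedModule), (@is_RInt_derive C_R_CompleteNormedModule).
  + rewrite Rmin_left, Rmax_right by lra. intros x Hx. apply DF. lra.
  + intros x _. apply Cf.
Qed.

End ComplexValuedIntegrals.

(** * Holomorphic square-root branches *)

Definition clamp (a b t : R) : R := Rmax a (Rmin b t).

Lemma clamp_in a b t : a <= b -> a <= clamp a b t <= b.
Proof. intros. unfold clamp, Rmax, Rmin. repeat destruct Rle_dec; lra. Qed.

Lemma clamp_id a b t : a <= t <= b -> clamp a b t = t.
Proof. intros. unfold clamp, Rmax, Rmin. repeat destruct Rle_dec; lra. Qed.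

Lemma clamp_lipschitz a b x y : Rabs (clamp a b y - clamp a b x) <= Rabs (y - x).
Proof.
unfold clamp, Rmax, Rmin. repeat destruct Rle_dec; unfold Rabs; repeat destruct Rcase_abs; lra.
Qed.

Section ComplexDerivatives.

Notation is_derive_C := (@is_derive C_AbsRing C_NormedModule).
Notation ex_derive_C := (@ex_derive C_AbsRing C_NormedModule).

Lemma is_derive_C_quadratic_remainder (F : C -> C) s l K d :
  0 < d -> 0 <= K ->
  (forall z, Cmod (Cminus z s) < d ->
     Cmod (Cminus (Cminus (F z) (F s)) (Cmult (Cminus z s) l))
       <= K * (Cmod (Cminus z s) * Cmod (Cminus z s))) ->
  is_derive_C F s l.
Proof.
intros Hd HK H. split; [apply is_linear_scal_l|].
intros x' Hx'.
apply (@is_filter_lim_locally_unique C_AbsRing (AbsRing_NormedModule C_AbsRing)) in Hx'.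
subst x'. intros eps.
assert (Hd2 : 0 < Rmin d (eps / (K + 1))).
{ apply Rmin_pos; [exact Hd | apply Rdiv_lt_0_compat; [apply cond_pos | lra]]. }
exists (mkposreal _ Hd2). intros y Hy.
change (Cmod (Cminus y s) < Rmin d (eps / (K + 1))) in Hy.
change (Cmod (Cminus (Cminus (F y) (F s)) (Cmult (Cminus y s) l)) <= eps * Cmod (Cminus y s)).
apply Rmin_Rgt in Hy as [Hy1 Hy2].
eapply Rle_trans; [apply H; exact Hy1|].
assert (0 <= Cmod (Cminus y s)) by apply Cmod_ge_0.
assert (Cmod (Cminus y s) * (K + 1) < eps).
{ apply Rmult_lt_reg_r with (/ (K + 1)); [apply Rinv_0_lt_compat; lra|].
  rewrite Rmult_assoc, Rinv_r by lra. lra. }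
assert (0 < eps) by apply cond_pos. nra.
Qed.

Lemma is_derive_C_Cmult_l (f : C -> C) s l c :
  is_derive_C f s l -> is_derive_C (fun z => Cmult c (f z)) s (Cmult c l).
Proof.
intros [_ Hd]. split; [apply is_linear_scal_l|].
intros x Hx eps. specialize (Hd x Hx).
assert (Hc : 0 <= Cmod c) by apply Cmod_ge_0.
assert (He : 0 < eps / (Cmod c + 1)) by (apply Rdiv_lt_0_compat; [apply cond_pos | lra]).
generalize (Hd (mkposreal _ He)). apply filter_imp. intros y Hy.
change (Cmod (Cminus (Cminus (f y) (f x)) (Cmult (Cminus y x) l))
  <= eps / (Cmod c + 1) * Cmod (Cminus y x)) in Hy.
change (Cmod (Cminus (Cminus (Cmult c (f y)) (Cmult c (f x))) (Cmult (Cminus y x) (Cmult c l)))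
  <= eps * Cmod (Cminus y x)).
replace (Cminus (Cminus (Cmult c (f y)) (Cmult c (f x))) (Cmult (Cminus y x) (Cmult c l)))
  with (Cmult c (Cminus (Cminus (f y) (f x)) (Cmult (Cminus y x) l))) by ring.
rewrite Cmod_mult.
assert (T : Cmod c * (eps / (Cmod c + 1)) <= eps).
{ assert (0 < eps) by apply cond_pos.
  apply Rmult_le_reg_r with (Cmod c + 1); [lra | field_simplify; nra]. }
assert (0 <= Cmod (Cminus y x)) by apply Cmod_ge_0.
apply Rle_trans with (Cmod c * (eps / (Cmod c + 1) * Cmod (Cminus y x)));
  [apply Rmult_le_compat_l; auto | nra].
Qed.

Lemma ex_derive_C_Cmod (g : C -> C) x :
  ex_derive_C g x -> forall eps, 0 < eps -> exists d, 0 < d /\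
    forall y, Cmod (Cminus y x) < d -> Cmod (Cminus (g y) (g x)) < eps.
Proof.
intros H eps He.
destruct (ex_derive_continuous g x H (fun w => Cmod (Cminus w (g x)) < eps)) as [d Hd].
{ apply locally_C_Cmod. exists eps. split; auto. }
exists d. split; [apply cond_pos|]. intros y Hy. apply Hd. exact Hy.
Qed.

Definition segment (s z : C) (l : R) : C := Cplus s (Cmult (RtoC (clamp 0 1 l)) (Cminus z s)).

Lemma Cmod_segment_sub_le s z l : Cmod (Cminus (segment s z l) s) <= Cmod (Cminus z s).
Proof.
unfold segment.
replace (Cminus (Cplus s (Cmult (RtoC (clamp 0 1 l)) (Cminus z s))) s)
  with (Cmult (RtoC (clamp 0 1 l)) (Cminus z s)) by ring.
rewrite Cmod_mult, Cmod_R. assert (H := clamp_in 0 1 l ltac:(lra)).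
rewrite Rabs_pos_eq by lra. assert (0 <= Cmod (Cminus z s)) by apply Cmod_ge_0. nra.
Qed.

Lemma continuous_segment_comp (g : C -> C) s z r l :
  Cmod (Cminus z s) < r -> (forall w, Cmod (Cminus w s) < r -> ex_derive_C g w) ->
  continuous (fun l => g (segment s z l)) l.
Proof.
intros Hz Hhol. apply continuous_RC_Cmod. intros eps He.
assert (Hl : Cmod (Cminus (segment s z l) s) < r)
  by (eapply Rle_lt_trans; [apply Cmod_segment_sub_le | exact Hz]).
destruct (ex_derive_C_Cmod g _ (Hhol _ Hl) eps He) as [d [Hd H]].
set (M := Cmod (Cminus z s)). assert (HM : 0 <= M) by apply Cmod_ge_0.
exists (d / (M + 1)). split; [apply Rdiv_lt_0_compat; lra|]. intros y Hy. apply H.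
unfold segment.
replace (Cminus (Cplus s (Cmult (RtoC (clamp 0 1 y)) (Cminus z s)))
                (Cplus s (Cmult (RtoC (clamp 0 1 l)) (Cminus z s))))
  with (Cmult (RtoC (clamp 0 1 y - clamp 0 1 l)) (Cminus z s)) by (rewrite RtoC_minus; ring).
rewrite Cmod_mult, Cmod_R. fold M.
assert (T := clamp_lipschitz 0 1 l y).
assert (0 <= Rabs (clamp 0 1 y - clamp 0 1 l)) by apply Rabs_pos.
assert (Rabs (y - l) * (M + 1) < d).
{ apply Rmult_lt_reg_r with (/ (M + 1)); [apply Rinv_0_lt_compat; lra|].
  rewrite Rmult_assoc, Rinv_r by lra. lra. }
nra.
Qed.

(* A holomorphic [g] with [g(w)^2 - g(s)^2 = w - s] cannot jump to the other
   branch: along the segment [s, z] the product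
   [|g(w) - g(s)| |g(w) + g(s)| = |w - s|] stays below [m^2/4], so
   [|g(w) - g(s)|] never reaches [m] and, by the intermediate value theorem,
   stays below it. *)
Lemma Cmod_branch_sum_ge (g : C -> C) s r m z :
  0 < m -> m <= Cmod (g s) ->
  (forall w, Cmod (Cminus w s) < r -> ex_derive_C g w) ->
  (forall w, Cmod (Cminus w s) < r ->
     Cminus (Cmult (g w) (g w)) (Cmult (g s) (g s)) = Cminus w s) ->
  Cmod (Cminus z s) < Rmin r (m * m / 4) ->
  m <= Cmod (Cplus (g z) (g s)).
Proof.
intros Hm Hgs Hhol Hsq Hz. apply Rmin_Rgt in Hz as [Hz1 Hz2].
destruct (Rle_lt_dec m (Cmod (Cplus (g z) (g s)))) as [ok | bad]; [exact ok | exfalso].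
set (psi := fun l => Cmod (Cminus (g (segment s z l)) (g s))).
assert (Cpsi : continuity psi).
{ intros l. apply (continuity_pt_Cmod (fun l => Cminus (g (segment s z l)) (g s))).
  apply (continuous_minus (V := C_R_NormedModule) _ (fun _ => g s));
    [exact (continuous_segment_comp g s z r l Hz1 Hhol) | apply continuous_const]. }
assert (Hsum : forall v, 2 * Cmod (g s) <= Cmod (Cminus v (g s)) + Cmod (Cplus v (g s))).
{ intros v. replace (2 * Cmod (g s)) with (Cmod (Cmult (RtoC 2) (g s)))
    by (rewrite Cmod_mult, Cmod_R, Rabs_pos_eq; lra).
  replace (Cmult (RtoC 2) (g s)) with (Cplus (Cplus v (g s)) (Copp (Cminus v (g s)))) by ring.
  eapply Rle_trans; [apply Cmod_triangle|]. rewrite Cmod_opp. lra. }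
assert (Hneq : forall l, psi l <> m).
{ intros l E. set (w := segment s z l).
  assert (Hw : Cmod (Cminus w s) < r)
    by (eapply Rle_lt_trans; [apply Cmod_segment_sub_le | exact Hz1]).
  assert (Hprod : Cmod (Cminus (g w) (g s)) * Cmod (Cplus (g w) (g s)) < m * m / 4).
  { rewrite <- Cmod_mult.
    replace (Cmult (Cminus (g w) (g s)) (Cplus (g w) (g s)))
      with (Cminus (Cmult (g w) (g w)) (Cmult (g s) (g s))) by ring.
    rewrite (Hsq _ Hw). eapply Rle_lt_trans; [apply Cmod_segment_sub_le | exact Hz2]. }
  specialize (Hsum (g w)). unfold psi in E. fold w in E. rewrite E in Hprod, Hsum. nra. }
assert (P0 : psi 0 = 0).
{ unfold psi, segment. rewrite clamp_id by lra.
  replace (Cplus s (Cmult (RtoC 0) (Cminus z s))) with s by ring.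
  replace (Cminus (g s) (g s)) with (RtoC 0) by ring. apply Cmod_0. }
assert (P1 : m < psi 1).
{ unfold psi, segment. rewrite clamp_id by lra.
  replace (Cplus s (Cmult (RtoC 1) (Cminus z s))) with z by ring.
  specialize (Hsum (g z)). lra. }
destruct (IVT_gen psi 0 1 m Cpsi) as [x [_ Hx]].
- rewrite Rmin_left, Rmax_right by lra. lra.
- exact (Hneq x Hx).
Qed.

End ComplexDerivatives.

(* The second-order Taylor remainder of [q |-> 2 / sqrt q] at [B^2], with
   [A] the branch value at [q = B^2 + d]. *)
Lemma Cmod_inv_taylor_remainder_le (A B d : C) m :
  0 < m -> m <= Cmod B -> m <= Cmod (Cplus A B) -> Cmod d <= m * m / 4 ->
  d = Cminus (Cmult A A) (Cmult B B) ->
  Cmod (Cplus (Cminus (Cdiv (RtoC 2) A) (Cdiv (RtoC 2) B)) (Cdiv d (Cpow B 3)))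
    <= 4 / (m * m * m * m * m) * (Cmod d * Cmod d).
Proof.
intros Hm HB HP Hd Ed.
assert (NB : B <> RtoC 0) by (intro E; rewrite E, Cmod_0 in HB; lra).
assert (NP : Cplus A B <> RtoC 0) by (intro E; rewrite E, Cmod_0 in HP; lra).
assert (HAB : Cmod (Cminus A B) <= m / 4).
{ replace (Cminus A B) with (Cdiv d (Cplus A B)) by (rewrite Ed; field; auto).
  rewrite Cmod_div by auto.
  apply Rmult_le_reg_r with (Cmod (Cplus A B)); [lra|].
  unfold Rdiv. rewrite Rmult_assoc, Rinv_l by lra. nra. }
assert (HA : m / 2 <= Cmod A)
  by (assert (T := Cmod_le_Cmod_sub B A); rewrite Cmod_sub_sym in T; lra).
assert (NA : A <> RtoC 0) by (intro E; rewrite E, Cmod_0 in HA; lra).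
replace (Cplus (Cminus (Cdiv (RtoC 2) A) (Cdiv (RtoC 2) B)) (Cdiv d (Cpow B 3)))
  with (Cmult (Cmult d d) (Cdiv (Cplus (Cplus A B) B)
          (Cmult (Cmult (Cmult B (Cmult B B)) (Cmult (Cplus A B) (Cplus A B))) A)))
  by (rewrite Ed; simpl; field; repeat split; auto).
set (a := Cmod A) in *. set (b := Cmod B) in *. set (P := Cmod (Cplus A B)) in *.
rewrite Cmod_mult, Cmod_div by (repeat apply Cmult_neq_0; auto).
rewrite !Cmod_mult. fold a b P.
assert (T : Cmod (Cplus (Cplus A B) B) <= P + b) by apply Cmod_triangle.
assert (Hb : 0 < b) by lra. assert (HP0 : 0 < P) by lra. assert (Ha0 : 0 < a) by lra.
assert (Hden : 0 < b * (b * b) * (P * P) * a) by (repeat apply Rmult_lt_0_compat; lra).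
assert (Hq : (P + b) / (b * (b * b) * (P * P) * a) <= 4 / (m * m * m * m * m)).
{ replace ((P + b) / (b * (b * b) * (P * P) * a))
    with (/ (b * b * b * P * a) + / (b * b * P * P * a)) by (field; lra).
  replace (4 / (m * m * m * m * m))
    with (/ (m * m * m * m * (m / 2)) + / (m * m * m * m * (m / 2))) by (field; lra).
  assert (m * m <= b * b) by nra. assert (m * m * m <= b * b * b) by nra.
  apply Rplus_le_compat; apply Rinv_le_contravar;
    try (repeat apply Rmult_lt_0_compat; lra); repeat apply Rmult_le_compat; nra. }
assert (Hd0 : 0 <= Cmod d * Cmod d) by (apply Rmult_le_pos; apply Cmod_ge_0).
apply Rle_trans with (Cmod d * Cmod d * ((P + b) / (b * (b * b) * (P * P) * a))); [|nra].
apply Rmult_le_compat_l; [exact Hd0|]. unfold Rdiv.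
apply Rmult_le_compat_r; [left; apply Rinv_0_lt_compat; exact Hden | exact T].
Qed.

(** * The integrals [I_nu] *)

Section Branch.

Variables (u : C) (D : C -> Prop) (Rb : R -> C -> C).

Hypothesis HD : open D.
Hypothesis Hnz : forall s t, D s -> -1 <= t <= 1 ->
  Cplus (Cpow (Cplus (RtoC t) u) 2) s <> RtoC 0.
Hypothesis Hsq : forall s t, D s -> -1 <= t <= 1 ->
  Cmult (Rb t s) (Rb t s) = Cplus (Cpow (Cplus (RtoC t) u) 2) s.
Hypothesis Hcont : forall s t, D s -> -1 <= t <= 1 ->
  filterlim (fun t' => Rb t' s)
    (within (fun t' => -1 <= t' <= 1) (locally t)) (locally (Rb t s)).
Hypothesis Hhol : forall s t, D s -> -1 <= t <= 1 -> ex_derive (fun z => Rb t z) s.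

(* [Rb] made constant outside [-1, 1], hence continuous in [t] on all of [R]. *)
Definition Rext (s : C) (t : R) : C := Rb (clamp (-1) 1 t) s.

Definition Inu_integrand (s : C) (n : nat) (t : R) : C :=
  Cdiv (Cpow (Cplus (RtoC t) u) n) (Cmult (RtoC (sqrt (t + 1))) (Rb t s)).

(* After the substitution [t = x^2 - 1], [I_n(s) = J s n / (sqrt 2 sa)];
   [dkern] is the [s]-derivative of [kern]. *)
Definition kern (s : C) (n : nat) (x : R) : C :=
  Cdiv (Cmult (RtoC 2) (Cpow (Cplus (RtoC (x * x - 1)) u) n)) (Rext s (x * x - 1)).

Definition dkern (s : C) (n : nat) (x : R) : C :=
  Copp (Cdiv (Cpow (Cplus (RtoC (x * x - 1)) u) n) (Cpow (Rext s (x * x - 1)) 3)).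

Definition J (s : C) (n : nat) : C := RIntC (kern s n) 0 (sqrt 2).

Definition dJ (s : C) (n : nat) : C := RIntC (dkern s n) 0 (sqrt 2).

Lemma Rb_neq_0 s t : D s -> -1 <= t <= 1 -> Rb t s <> RtoC 0.
Proof. intros Ds Ht E. apply (Hnz s t Ds Ht). rewrite <- (Hsq s t Ds Ht), E. ring. Qed.

Lemma Rext_neq_0 s t : D s -> Rext s t <> RtoC 0.
Proof. intros Ds. apply Rb_neq_0; [exact Ds | apply clamp_in; lra]. Qed.

Lemma Rext_sq s t : D s -> -1 <= t <= 1 ->
  Cmult (Rext s t) (Rext s t) = Cplus (Cmult (Cplus (RtoC t) u) (Cplus (RtoC t) u)) s.
Proof. intros Ds Ht. unfold Rext. rewrite clamp_id, Hsq by auto. simpl. ring. Qed.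

Lemma continuous_Rext s t : D s -> continuous (Rext s) t.
Proof.
intros Ds P HP.
assert (Ht := clamp_in (-1) 1 t ltac:(lra)).
destruct (proj1 (locally_R_Rabs _ _) (Hcont s _ Ds Ht P HP)) as [d [Hd H]].
apply locally_R_Rabs. exists d. split; [exact Hd|]. intros y Hy.
apply H; [eapply Rle_lt_trans; [apply clamp_lipschitz | exact Hy] | apply clamp_in; lra].
Qed.

Lemma sqr_sub_one_range x : 0 <= x <= sqrt 2 -> -1 <= x * x - 1 <= 1.
Proof.
intros Hx. assert (x * x <= sqrt 2 * sqrt 2) by (apply Rmult_le_compat; lra).
rewrite sqrt_sqrt in H by lra. nra.
Qed.

Lemma continuous_kern s n x : D s -> continuous (kern s n) x.
Proof.
intros Ds. apply continuous_Cdiv; [| | apply Rext_neq_0, Ds].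
- apply continuous_Cmult; [apply continuous_const|].
  apply continuous_Cpow, (continuous_plus (V := C_R_NormedModule)); [|apply continuous_const].
  apply continuous_RtoC, continuity_pt_filterlim. reg.
- apply (continuous_comp (fun y => y * y - 1) (Rext s)); [|apply continuous_Rext, Ds].
  apply continuity_pt_filterlim. reg.
Qed.

Lemma continuous_dkern s n x : D s -> continuous (dkern s n) x.
Proof.
intros Ds. apply (continuous_opp (V := C_R_NormedModule)), continuous_Cdiv.
- apply continuous_Cpow, (continuous_plus (V := C_R_NormedModule)); [|apply continuous_const].
  apply continuous_RtoC, continuity_pt_filterlim. reg.
- apply continuous_Cpow, (continuous_comp (fun y => y * y - 1) (Rext s));
    [apply continuity_pt_filterlim; reg | apply continuous_Rext, Ds].
- apply Cpow_nz, Rext_neq_0, Ds.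
Qed.

Lemma is_RInt_J s n : D s -> is_RInt (kern s n) 0 (sqrt 2) (J s n).
Proof. intros Ds. apply is_RInt_RIntC_continuous. intros x _. apply continuous_kern, Ds. Qed.

Lemma is_RInt_dJ s n : D s -> is_RInt (dkern s n) 0 (sqrt 2) (dJ s n).
Proof. intros Ds. apply is_RInt_RIntC_continuous. intros x _. apply continuous_dkern, Ds. Qed.

Lemma is_RInt_Inu_integrand s n a : D s -> -1 < a <= 1 ->
  is_RInt (Inu_integrand s n) a 1 (RIntC (kern s n) (sqrt (a + 1)) (sqrt 2)).
Proof.
intros Ds Ha.
set (G := fun t => Cdiv (Cpow (Cplus (RtoC t) u) n) (Cmult (RtoC (sqrt (t + 1))) (Rext s t))).
assert (CG : forall t, -1 < t -> continuous G t).
{ intros t Ht. apply continuous_Cdiv.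
  - apply continuous_Cpow, (continuous_plus (V := C_R_NormedModule));
      [apply continuous_RtoC, continuous_id | apply continuous_const].
  - apply continuous_Cmult; [|apply continuous_Rext, Ds].
    apply continuous_RtoC, continuous_sqrt_comp, continuity_pt_filterlim. reg.
  - apply Cmult_neq_0; [|apply Rext_neq_0, Ds].
    intro E. injection E. assert (0 < sqrt (t + 1)) by (apply sqrt_lt_R0; lra). lra. }
assert (Hs : sqrt (a + 1) <= sqrt 2) by (apply sqrt_le_1_alt; lra).
assert (Hs0 : 0 <= sqrt (a + 1)) by apply sqrt_pos.
assert (HC := @is_RInt_comp C_R_CompleteNormedModule G (fun x => x * x - 1) (fun x => 2 * x)
  (sqrt (a + 1)) (sqrt 2)).
rewrite Rmin_left, Rmax_right, !sqrt_sqrt in HC by lra.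
replace (a + 1 - 1) with a in HC by ring. replace (2 - 1) with 1 in HC by ring.
assert (HCG : forall x, sqrt (a + 1) <= x <= sqrt 2 -> -1 < x * x - 1).
{ intros x Hx. assert (sqrt (a + 1) * sqrt (a + 1) <= x * x) by (apply Rmult_le_compat; lra).
  rewrite sqrt_sqrt in H by lra. lra. }
specialize (HC (fun x Hx => CG _ (HCG x Hx))).
specialize (HC ltac:(intros x _; split;
  [auto_derive; [exact I | ring] | apply continuity_pt_filterlim; reg])).
replace (RIntC (kern s n) (sqrt (a + 1)) (sqrt 2)) with (RIntC G a 1).
- apply (is_RInt_ext G).
  + rewrite Rmin_left, Rmax_right by lra. intros x Hx.
    unfold G, Inu_integrand, Rext. rewrite clamp_id by lra. reflexivity.
  + apply is_RInt_RIntC_continuous. rewrite Rmin_left, Rmax_right by lra.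
    intros x Hx. apply CG. lra.
- symmetry. apply (@is_RInt_unique C_R_CompleteNormedModule). eapply is_RInt_ext; [|exact HC].
  rewrite Rmin_left, Rmax_right by exact Hs. intros x Hx.
  rewrite scal_R_Cmult. unfold G, kern.
  replace (x * x - 1 + 1) with (x * x) by ring. rewrite sqrt_square by lra.
  rewrite RtoC_mult. C_eq. field. split; [apply Rext_neq_0, Ds | intro E; injection E; lra].
Qed.

Lemma Inu_eq_J (sa : C) s n : D s ->
  Inu u sa Rb n s = Cmult (Cinv (Cmult (RtoC (sqrt 2)) sa)) (J s n).
Proof.
intros Ds. unfold Inu. f_equal. apply is_RInt_gen_unique.
set (Jfrom := fun x => RIntC (kern s n) x (sqrt 2)).
assert (Hc : continuous (fun a => Jfrom (sqrt (a + 1))) (-1)).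
{ apply continuous_comp.
  - apply continuous_sqrt_comp, continuity_pt_filterlim. reg.
  - replace (sqrt (-1 + 1)) with 0 by (replace (-1 + 1) with 0 by ring; symmetry; apply sqrt_0).
    apply (continuous_RInt_2 (kern s n) 0 (sqrt 2)), filter_forall. intros x.
    apply is_RInt_RIntC_continuous. intros y _. apply continuous_kern, Ds. }
intros P HP.
replace (J s n) with (Jfrom (sqrt (-1 + 1))) in HP
  by (unfold Jfrom, J; replace (-1 + 1) with 0 by ring; rewrite sqrt_0; reflexivity).
apply Filter_prod with (fun a => -1 < a <= 1 /\ P (Jfrom (sqrt (a + 1)))) (fun b => b = 1).
- assert (L : locally (-1) (fun a => a <= 1)).
  { apply locally_R_Rabs. exists 1. split; [lra|]. intros y Hy. apply Rabs_lt_between' in Hy. lra. }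
  assert (HPc : locally (-1) (fun a => P (Jfrom (sqrt (a + 1))))) by exact (Hc P HP).
  unfold at_right, within. generalize (filter_and _ _ HPc L). apply filter_imp.
  intros a [HPa Ha] Ha'. split; [lra | exact HPa].
- reflexivity.
- intros a b [Ha HPa] Hb. subst b. exists (Jfrom (sqrt (a + 1))).
  split; [apply is_RInt_Inu_integrand; auto | exact HPa].
Qed.

Lemma Cmod_Rext_ge s : D s -> exists m, 0 < m /\ forall t, m <= Cmod (Rext s t).
Proof.
intros Ds.
destruct (continuity_ab_min (fun t => Cmod (Rext s t)) (-1) 1) as [t0 [Hmin Ht0]]; [lra | |].
{ intros t _. apply continuity_pt_Cmod, continuous_Rext, Ds. }
exists (Cmod (Rext s t0)). split; [apply Cmod_gt_0, Rext_neq_0, Ds|]. intros t.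
replace (Rext s t) with (Rext s (clamp (-1) 1 t)).
- apply Hmin, clamp_in. lra.
- unfold Rext. rewrite (clamp_id _ _ (clamp _ _ t)); [reflexivity | apply clamp_in; lra].
Qed.

Lemma kern_taylor_remainder_le s z n x m r :
  D s -> 0 < m -> (forall t, m <= Cmod (Rext s t)) ->
  (forall w, Cmod (Cminus w s) < r -> D w) -> Cmod (Cminus z s) < Rmin r (m * m / 4) ->
  0 <= x <= sqrt 2 ->
  Cmod (Cminus (Cminus (kern z n x) (kern s n x)) (Cmult (Cminus z s) (dkern s n x)))
    <= (1 + Cmod u) ^ n * (4 / (m * m * m * m * m)) * (Cmod (Cminus z s) * Cmod (Cminus z s)).
Proof.
intros Ds Hm Hmb HrD Hz Hx.
assert (Dz : D z) by (apply HrD; apply Rmin_Rgt in Hz; tauto).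
assert (Ht := sqr_sub_one_range x Hx).
set (w := Cplus (RtoC (x * x - 1)) u). set (A := Rext z (x * x - 1)). set (B := Rext s (x * x - 1)).
assert (NA : A <> RtoC 0) by apply Rext_neq_0, Dz.
assert (NB : B <> RtoC 0) by apply Rext_neq_0, Ds.
replace (Cminus (Cminus (kern z n x) (kern s n x)) (Cmult (Cminus z s) (dkern s n x)))
  with (Cmult (Cpow w n)
    (Cplus (Cminus (Cdiv (RtoC 2) A) (Cdiv (RtoC 2) B)) (Cdiv (Cminus z s) (Cpow B 3))))
  by (unfold kern, dkern; fold w A B; field; repeat split; auto using Cpow_nz).
rewrite Cmod_mult, Cmod_pow, Rmult_assoc.
apply Rmult_le_compat; [apply pow_le, Cmod_ge_0 | apply Cmod_ge_0 | |].
- apply pow_incr. split; [apply Cmod_ge_0|]. unfold w.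
  eapply Rle_trans; [apply Cmod_triangle|]. rewrite Cmod_R.
  assert (Rabs (x * x - 1) <= 1) by (apply Rabs_le; lra). lra.
- apply Cmod_inv_taylor_remainder_le; [exact Hm | apply Hmb | | apply Rmin_Rgt in Hz; lra |].
  + unfold A, B, Rext. rewrite !clamp_id by exact Ht.
    apply (Cmod_branch_sum_ge (fun v => Rb (x * x - 1) v) s r m z Hm).
    * rewrite <- (clamp_id (-1) 1 (x * x - 1)) by exact Ht. apply Hmb.
    * intros v Hv. apply Hhol; [apply HrD, Hv | exact Ht].
    * intros v Hv. rewrite (Hsq v _ (HrD v Hv) Ht), (Hsq s _ Ds Ht). ring.
    * exact Hz.
  + unfold A, B. rewrite (Rext_sq z), (Rext_sq s) by auto. ring.
Qed.

Lemma is_derive_J s n : D s -> is_derive (fun z => J z n) s (dJ s n).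
Proof.
intros Ds.
destruct (Cmod_Rext_ge s Ds) as [m [Hm Hmb]].
destruct (proj1 (locally_C_Cmod s D) (HD s Ds)) as [r [Hr HrD]].
set (K := (1 + Cmod u) ^ n * (4 / (m * m * m * m * m))).
assert (HK : 0 <= K).
{ apply Rmult_le_pos; [apply pow_le; assert (T := Cmod_ge_0 u); lra|].
  apply Rdiv_le_0_compat; [lra | repeat apply Rmult_lt_0_compat; lra]. }
apply (is_derive_C_quadratic_remainder _ s _ (K * sqrt 2) (Rmin r (m * m / 4)));
  [apply Rmin_pos; nra | apply Rmult_le_pos; [exact HK | apply sqrt_pos] |].
intros z Hz. assert (Dz : D z) by (apply HrD; apply Rmin_Rgt in Hz; tauto).
assert (Hrem := is_RInt_minus _ _ _ _ _ _
  (is_RInt_minus _ _ _ _ _ _ (is_RInt_J z n Dz) (is_RInt_J s n Ds))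
  (is_RInt_Cmult _ _ _ _ (Cminus z s) (is_RInt_dJ s n Ds))).
replace (K * sqrt 2 * (Cmod (Cminus z s) * Cmod (Cminus z s)))
  with (K * (Cmod (Cminus z s) * Cmod (Cminus z s)) * (sqrt 2 - 0)) by ring.
refine (is_RInt_Cmod_le _ 0 (sqrt 2) _ _ (sqrt_pos 2) _ Hrem).
intros x Hx. exact (kern_taylor_remainder_le s z n x m r Ds Hm Hmb HrD Hz Hx).
Qed.

Lemma dJ_recurrence s n : D s ->
  dJ s (n + 2) = Cminus (Copp (Cmult (RtoC (/ 2)) (J s n))) (Cmult s (dJ s n)).
Proof.
intros Ds.
assert (I := is_RInt_minus _ _ _ _ _ _
  (is_RInt_Cmult _ _ _ _ (Copp (RtoC (/ 2))) (is_RInt_J s n Ds))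
  (is_RInt_Cmult _ _ _ _ s (is_RInt_dJ s n Ds))).
replace (Cminus (Copp (Cmult (RtoC (/ 2)) (J s n))) (Cmult s (dJ s n)))
  with (minus (Cmult (Copp (RtoC (/ 2))) (J s n)) (Cmult s (dJ s n))) by (C_eq; ring).
apply (@is_RInt_unique C_R_CompleteNormedModule). eapply is_RInt_ext; [|exact I].
rewrite Rmin_left, Rmax_right by apply sqrt_pos. intros x Hx.
assert (Ht := sqr_sub_one_range x ltac:(lra)). assert (NB := Rext_neq_0 s (x * x - 1) Ds).
assert (E := Rext_sq s (x * x - 1) Ds Ht).
unfold kern, dkern. rewrite Cpow_add_r.
set (B := Rext s (x * x - 1)) in *. set (w := Cplus (RtoC (x * x - 1)) u) in *.
assert (Es : s = Cminus (Cmult B B) (Cmult w w)) by (rewrite E; ring).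
rewrite RtoC_inv by lra. simpl Cpow. C_eq. rewrite Es.
field. exact NB.
Qed.

Lemma is_derive_sqr_sub_one_u x :
  is_derive (fun y => Cplus (RtoC (y * y - 1)) u) x (RtoC (2 * x)).
Proof.
replace (RtoC (2 * x)) with (Cplus (RtoC (2 * x)) (RtoC 0)) by ring.
apply (is_derive_plus (V := C_R_NormedModule));
  [|exact (@is_derive_const R_AbsRing C_R_NormedModule u x)].
apply (is_derive_RtoC (fun y => y * y - 1)). auto_derive; [exact I | ring].
Qed.

Lemma is_derive_Rext_sqr_sub_one s x : D s -> 0 <= x < sqrt 2 ->
  is_derive (fun y => Rext s (y * y - 1)) x
    (Cdiv (Cmult (RtoC (2 * x)) (Cplus (RtoC (x * x - 1)) u)) (Rext s (x * x - 1))).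
Proof.
intros Ds Hx.
set (w := fun y => Cplus (RtoC (y * y - 1)) u).
assert (HQ := is_derive_plus (V := C_R_NormedModule) _ (fun _ => s) x _ _
  (is_derive_RC_mult _ _ _ _ _ (is_derive_sqr_sub_one_u x) (is_derive_sqr_sub_one_u x))
  (@is_derive_const R_AbsRing C_R_NormedModule s x)).
assert (N2 : RtoC 2 <> RtoC 0) by (intro E; injection E; lra).
assert (Nr := Rext_neq_0 s (x * x - 1) Ds).
match type of HQ with is_derive _ _ ?q =>
  replace (Cdiv (Cmult (RtoC (2 * x)) (Cplus (RtoC (x * x - 1)) u)) (Rext s (x * x - 1)))
    with (Cdiv q (Cmult (RtoC 2) (Rext s (x * x - 1)))) by (C_eq; field; exact Nr) end.
apply (is_derive_RC_sqr_inv (fun y => Rext s (y * y - 1)) _ x _ HQ).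
- apply (continuous_comp (fun y => y * y - 1) (Rext s));
    [apply continuity_pt_filterlim; reg | apply continuous_Rext, Ds].
- exact Nr.
- assert (Hs2 : 0 < sqrt 2 - x) by lra.
  exists (mkposreal _ Hs2). intros y Hy. apply Rabs_lt_between' in Hy. simpl in Hy.
  unfold w. rewrite Rext_sq by (auto; assert (sqrt 2 * sqrt 2 = 2) by (apply sqrt_sqrt; lra); nra).
  reflexivity.
Qed.

Definition antider (s : C) (k : nat) (y : R) : C :=
  Cdiv (Cmult (RtoC y) (Cpow (Cplus (RtoC (y * y - 1)) u) k)) (Rext s (y * y - 1)).

(* The derivative of [antider], rewritten with [x^2 = (x^2 - 1 + u) + 1 - u]
   in terms of the kernels. *)
Definition antider_deriv (s : C) (k : nat) (x : R) : C :=
  Cplus (Cplus (Cplus (Cmult (RtoC (/ 2 + INR k)) (kern s k x))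
                      (Cmult (Cmult (RtoC (INR k)) (Cminus (RtoC 1) u)) (kern s (k - 1) x)))
               (Cmult (RtoC 2) (dkern s (k + 2) x)))
        (Cmult (Cmult (RtoC 2) (Cminus (RtoC 1) u)) (dkern s (k + 1) x)).

Lemma is_derive_antider s k x : D s -> 0 <= x < sqrt 2 ->
  is_derive (antider s k) x (antider_deriv s k x).
Proof.
intros Ds Hx.
assert (H := is_derive_RC_mult _ _ _ _ _
  (is_derive_RC_mult _ _ _ _ _ (is_derive_RtoC (fun y => y) x 1 (is_derive_id x))
     (is_derive_RC_Cpow _ _ _ k (is_derive_sqr_sub_one_u x)))
  (is_derive_RC_inv _ _ _ (is_derive_Rext_sqr_sub_one s x Ds Hx) (Rext_neq_0 s _ Ds))).
match type of H with is_derive _ _ ?l => replace (antider_deriv s k x) with l; [exact H|] end.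
assert (Nr := Rext_neq_0 s (x * x - 1) Ds).
unfold antider_deriv, kern, dkern. rewrite !Cpow_add_r.
set (r := Rext s (x * x - 1)) in *. rewrite ?RtoC_plus, ?RtoC_minus, ?RtoC_mult, ?RtoC_inv by lra.
C_eq. destruct k as [|k]; [simpl; field; exact Nr|].
rewrite S_INR, !RtoC_plus. cbn [Cpow pred Nat.sub]. rewrite Nat.sub_0_r. field. exact Nr.
Qed.

Lemma continuous_antider s k x : D s -> continuous (antider s k) x.
Proof.
intros Ds. unfold antider. apply continuous_Cdiv; [| |apply Rext_neq_0, Ds].
- apply continuous_Cmult; [apply continuous_RtoC, continuous_id|].
  apply continuous_Cpow, (continuous_plus (V := C_R_NormedModule)); [|apply continuous_const].
  apply continuous_RtoC, continuity_pt_filterlim. reg.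
- apply (continuous_comp (fun y => y * y - 1) (Rext s));
    [apply continuity_pt_filterlim; reg | apply continuous_Rext, Ds].
Qed.

Lemma continuous_antider_deriv s k x : D s -> continuous (antider_deriv s k) x.
Proof.
intros Ds.
assert (Ck := fun n => continuous_kern s n x Ds).
assert (Cdk := fun n => continuous_dkern s n x Ds).
assert (Cc := fun c : C => @continuous_const R_UniformSpace C_UniformSpace c x).
apply (continuous_plus (V := C_R_NormedModule));
  [apply (continuous_plus (V := C_R_NormedModule));
     [apply (continuous_plus (V := C_R_NormedModule)) |] |];
  apply continuous_Cmult; auto.
Qed.

(* The fundamental theorem of calculus for [antider], solved for
   [dJ s (k + 2)]; [antider] vanishes at [0]. *)
Lemma dJ_add2 s k : D s ->
  dJ s (k + 2) = Cmult (RtoC (/ 2))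
    (Cminus (Cminus (Cminus (Cdiv (Cmult (RtoC (sqrt 2)) (Cpow (Cplus (RtoC 1) u) k)) (Rb 1 s))
                            (Cmult (RtoC (/ 2 + INR k)) (J s k)))
                    (Cmult (Cmult (RtoC (INR k)) (Cminus (RtoC 1) u)) (J s (k - 1))))
            (Cmult (Cmult (RtoC 2) (Cminus (RtoC 1) u)) (dJ s (k + 1)))).
Proof.
intros Ds.
assert (Hs2 : 0 < sqrt 2) by (apply sqrt_lt_R0; lra).
assert (Icomb := is_RInt_plus _ _ _ _ _ _ (is_RInt_plus _ _ _ _ _ _ (is_RInt_plus _ _ _ _ _ _
    (is_RInt_Cmult _ _ _ _ (RtoC (/ 2 + INR k)) (is_RInt_J s k Ds))
    (is_RInt_Cmult _ _ _ _ (Cmult (RtoC (INR k)) (Cminus (RtoC 1) u)) (is_RInt_J s (k - 1) Ds)))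
    (is_RInt_Cmult _ _ _ _ (RtoC 2) (is_RInt_dJ s (k + 2) Ds)))
    (is_RInt_Cmult _ _ _ _ (Cmult (RtoC 2) (Cminus (RtoC 1) u)) (is_RInt_dJ s (k + 1) Ds))).
apply (is_RInt_ext _ (antider_deriv s k)) in Icomb; [|intros; reflexivity].
assert (Iftc : is_RInt (antider_deriv s k) 0 (sqrt 2)
                 (Cminus (antider s k (sqrt 2)) (antider s k 0))).
{ apply is_RInt_derive_RC_left; [exact Hs2 | intros x; apply continuous_antider_deriv, Ds |
    apply continuous_antider, Ds | intros x Hx; apply is_derive_antider; auto]. }
replace (Cdiv (Cmult (RtoC (sqrt 2)) (Cpow (Cplus (RtoC 1) u) k)) (Rb 1 s))
  with (Cminus (antider s k (sqrt 2)) (antider s k 0)).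
- rewrite <- (@is_RInt_unique C_R_CompleteNormedModule _ _ _ _ Iftc),
    (@is_RInt_unique C_R_CompleteNormedModule _ _ _ _ Icomb).
  rewrite (RtoC_inv 2) by lra. C_eq. field.
- unfold antider, Rext. rewrite sqrt_sqrt by lra. replace (2 - 1) with 1 by ring.
  rewrite clamp_id by lra. C_eq. simpl. field.
  split; apply Rb_neq_0; auto; [lra | apply clamp_in; lra].
Qed.

Lemma is_derive_Inu (sa : C) s n : D s ->
  is_derive (Inu u sa Rb n) s (Cmult (Cinv (Cmult (RtoC (sqrt 2)) sa)) (dJ s n)).
Proof.
intros Ds. apply (is_derive_ext_loc (fun z => Cmult (Cinv (Cmult (RtoC (sqrt 2)) sa)) (J z n))).
- apply (filter_imp D); [intros z Dz; symmetry; apply Inu_eq_J, Dz |].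
  apply locally_C_AbsRing, HD, Ds.
- apply is_derive_C_Cmult_l, is_derive_J, Ds.
Qed.

End Branch.

Theorem lemma3p3
  (u a sa : C) (D : C -> Prop) (Rb : R -> C -> C)
  (Ha : a <> RtoC 0)
  (Hsa : Cmult sa sa = a)
  (HD : open D)
  (Hnz : forall s t, D s -> -1 <= t <= 1 ->
           Cplus (Cpow (Cplus (RtoC t) u) 2) s <> RtoC 0)
  (Hsq : forall s t, D s -> -1 <= t <= 1 ->
           Cmult (Rb t s) (Rb t s) = Cplus (Cpow (Cplus (RtoC t) u) 2) s)
  (Hcont : forall s t, D s -> -1 <= t <= 1 ->
           filterlim (fun t' => Rb t' s)
             (within (fun t' => -1 <= t' <= 1) (locally t)) (locally (Rb t s)))
  (Hhol : forall s t, D s -> -1 <= t <= 1 -> ex_derive (fun z => Rb t z) s) :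
  let I := Inu u sa Rb in
  let R1 := fun s => Rb 1 s in
  forall s, D s ->
    (forall nu, ex_derive (I nu) s) /\
    (forall nu, C_derive (I (nu + 2)%nat) s =
       Cminus (Copp (Cmult (RtoC (/2)) (I nu s))) (Cmult s (C_derive (I nu) s))) /\
    C_derive (fun z => Cplus (I 2%nat z) (I 1%nat z)) s =
       Cplus (Cminus (Cmult u (C_derive (I 1%nat) s)) (Cmult (RtoC (/4)) (I 0%nat s)))
             (Cinv (Cmult (RtoC 2) (Cmult sa (R1 s)))) /\
    C_derive (fun z => Cminus (I 3%nat z) (I 1%nat z)) s =
       Cplus (Cplus (Cminus (Cmult (Cminus (Cpow u 2) (Cmult (RtoC 2) u)) (C_derive (I 1%nat) s))
                            (Cmult (RtoC (3/4)) (I 1%nat s)))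
                    (Cmult (Cdiv (Cminus u (RtoC 1)) (RtoC 4)) (I 0%nat s)))
             (Cdiv u (Cmult sa (R1 s))).
Proof.
intros I R1 s Ds.
set (c := Cinv (Cmult (RtoC (sqrt 2)) sa)).
assert (Nsa : sa <> RtoC 0) by (intro E; apply Ha; rewrite <- Hsa, E; ring).
assert (N2 : RtoC (sqrt 2) <> RtoC 0)
  by (intro E; injection E; assert (T := sqrt_lt_R0 2 ltac:(lra)); lra).
assert (NR1 : R1 s <> RtoC 0) by (apply (Rb_neq_0 u D Rb); auto; lra).
assert (EI : forall n, I n s = Cmult c (J u Rb s n)) by (intros; apply (Inu_eq_J u D Rb); auto).
assert (DI : forall n, is_derive (I n) s (Cmult c (dJ u Rb s n)))
  by (intros; apply (is_derive_Inu u D Rb); auto).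
assert (CD : forall n, C_derive (I n) s = Cmult c (dJ u Rb s n))
  by (intros n; apply is_C_derive_unique, DI).
assert (E2 := dJ_add2 u D Rb Hnz Hsq Hcont s 0 Ds).
assert (E3 := dJ_add2 u D Rb Hnz Hsq Hcont s 1 Ds).
simpl in E2, E3.
split; [|split; [|split]].
- intros nu. exists (Cmult c (dJ u Rb s nu)). apply DI.
- intros nu. rewrite !CD, EI, (dJ_recurrence u D Rb) by auto. ring.
- rewrite (is_C_derive_unique (fun z => Cplus (I 2%nat z) (I 1%nat z)) s
    (Cplus (Cmult c (dJ u Rb s 2)) (Cmult c (dJ u Rb s 1))))
    by exact (is_derive_plus _ _ _ _ _ (DI 2%nat) (DI 1%nat)).
  rewrite CD, !EI, E2. unfold c, R1.
  rewrite ?RtoC_plus, ?RtoC_div, ?RtoC_inv by lra. field. auto.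
- rewrite (is_C_derive_unique (fun z => Cminus (I 3%nat z) (I 1%nat z)) s
    (Cminus (Cmult c (dJ u Rb s 3)) (Cmult c (dJ u Rb s 1))))
    by exact (is_derive_minus _ _ _ _ _ (DI 3%nat) (DI 1%nat)).
  rewrite CD, !EI, E3, E2. unfold c, R1.
  rewrite ?RtoC_plus, ?RtoC_div, ?RtoC_inv by lra. field. auto.
Qed.
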